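(* For all integers $n\ge k\ge 2$ and $r\ge 0$, \[ \mathsf{opt}_{\operatorname{bandit}}^{\operatorname{det}}(n,k,r)\ge k(r+1)-1. \]
   Context: Prediction with expert advice: $\mathcal{Y}=\{1,\dots,k\}$, $\mathcal{X}=[k]^n$, experts $h_i(x)=x_i$, $i=1,\dots,n$. $\mathcal{P}_r$ is the set of finite sequences of examples in $\mathcal{X}\times\mathcal{Y}$ on which some $h_i$ errs on at most $r$ examples. Bandit feedback: each round the adversary presents $x_t$, a deterministic learner predicts $\hat y_t$ as a function of past observations and $x_t$, and learns only whether $\hat y_t$ equals the true label $y_t$. $\mathsf{opt}_{\operatorname{bandit}}^{\operatorname{det}}(n,k,r)$ is the infimum over deterministic learners of the supremum over $S\in\mathcal{P}_r$ of the number of mistakes ($\hat y_t\ne y_t$). *)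

From mathcomp Require Import all_boot.
Set Implicit Arguments. Unset Strict Implicit. Unset Printing Implicit Defensive.

(* Labels Y = {1,..,k} are represented by 'I_k = {0,..,k-1}.
   Instances X = [k]^n are functions 'I_n -> 'I_k; expert h_i(x) = x i. *)
Definition instance (n k : nat) : Type := {ffun 'I_n -> 'I_k}.

Definition expert (n k : nat) (i : 'I_n) (x : instance n k) : 'I_k := x i.

(* A deterministic bandit learner: given the history of past observations
   (instance x_s, own prediction yhat_s, feedback bit [yhat_s == y_s]) in
   chronological order, and the current instance x_t, it outputs a label. *)
Definition learner (n k : nat) : Type :=
  seq (instance n k * 'I_k * bool) -> instance n k -> 'I_k.

Fixpoint mistakes_from (n k : nat) (L : learner n k)
    (hist : seq (instance n k * 'I_k * bool)) (S : seq (instance n k * 'I_k))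
    : nat :=
  match S with
  | [::] => 0
  | (x, y) :: S' =>
      let yh := L hist x in
      (yh != y) + mistakes_from L (rcons hist (x, yh, yh == y)) S'
  end.

Definition mistakes (n k : nat) (L : learner n k) (S : seq (instance n k * 'I_k))
  : nat := mistakes_from L [::] S.

Definition expert_errors (n k : nat) (i : 'I_n) (S : seq (instance n k * 'I_k))
  : nat := count (fun p => expert i p.1 != p.2) S.

Definition in_P (n k r : nat) (S : seq (instance n k * 'I_k)) : Prop :=
  exists i : 'I_n, expert_errors i S <= r.

(* opt^det_bandit(n,k,r) >= m  <->  for every deterministic learner there is
   S in P_r on which it makes at least m mistakes (inf over learners of sup
   over S, values in nat U {oo}). *)
Definition opt_bandit_det_ge (n k r m : nat) : Prop :=
  forall L : learner n k, exists S : seq (instance n k * 'I_k),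
    in_P r S /\ m <= mistakes L S.

(* Present one instance over and over and always answer "wrong".  Among the
   k(r+1)-1 predictions some label j is predicted at most r times; label every
   round by j, except the rounds where the learner said j, which get another
   label.  The learner errs every round, while an expert that predicts j errs
   only on those at most r rounds. *)
From mathcomp Require Import all_boot.
Set Implicit Arguments. Unset Strict Implicit. Unset Printing Implicit Defensive.

Lemma sum_count_mem (T : finType) (s : seq T) :
  \sum_(j : T) count_mem j s = size s.
Proof.
elim: s => [|a s IHs] /=; first by rewrite big1.
rewrite big_split /= IHs -add1n; congr (_ + _).
by rewrite (bigD1 a) //= eqxx big1 // => j ja; rewrite eq_sym (negbTE ja).
Qed.

Lemma rare_mem (T : finType) (r : nat) (s : seq T) :
  size s < #|T| * r.+1 -> exists j : T, count_mem j s <= r.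
Proof.
move=> small_s; apply/existsP; apply: contraLR small_s => /existsPn frequent.
rewrite -leqNgt -sum_count_mem -sum_nat_const.
by apply: leq_sum => j _; rewrite ltnNge frequent.
Qed.

Lemma exists_neq (T : finType) (j : T) : 1 < #|T| -> exists o : T, o != j.
Proof.
move=> /card_gt1P [y [z [_ _ y_neq_z]]].
by case: (eqVneq y j) => [<-|]; [exists z; rewrite eq_sym | exists y].
Qed.

Section RejectedPredictions.
Variables (n k : nat) (L : learner n k) (x : instance n k).

Fixpoint rejected_predictions (hist : seq (instance n k * 'I_k * bool))
    (m : nat) : seq 'I_k :=
  if m is m'.+1 then
    let yh := L hist x in yh :: rejected_predictions (rcons hist (x, yh, false)) m'
  else [::].

Lemma size_rejected_predictions hist m :
  size (rejected_predictions hist m) = m.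
Proof. by elim: m hist => [|m IHm] hist //=; rewrite IHm. Qed.

Lemma mistakes_rejected_predictions (f : 'I_k -> 'I_k) hist m :
  (forall y, f y != y) ->
  mistakes_from L hist [seq (x, f y) | y <- rejected_predictions hist m] = m.
Proof.
move=> f_neq; elim: m hist => [|m IHm] hist //=.
have yh_wrong := f_neq (L hist x).
by rewrite eq_sym yh_wrong (negbTE yh_wrong) IHm.
Qed.

End RejectedPredictions.

Definition diag_instance (n k : nat) (y0 : 'I_k) : instance n k :=
  [ffun i : 'I_n => odflt y0 (insub (val i))].

Lemma expert_diag_instance (n k : nat) (y0 j : 'I_k) (hkn : k <= n) :
  expert (widen_ord hkn j) (diag_instance n y0) = j.
Proof. by rewrite /expert ffunE /= valK. Qed.

Definition swap_label (k : nat) (j o y : 'I_k) : 'I_k := if y == j then o else j.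

Lemma swap_label_neq (k : nat) (j o y : 'I_k) : o != j -> swap_label j o y != y.
Proof. by rewrite /swap_label; case: (eqVneq y j) => [-> //|]; rewrite eq_sym. Qed.

Lemma swap_label_eq (k : nat) (j o y : 'I_k) :
  o != j -> (swap_label j o y == j) = (y != j).
Proof.
by move=> /negbTE o_j; rewrite /swap_label; case: (eqVneq y j); rewrite ?o_j ?eqxx.
Qed.

Theorem lemma4p6 (n k r : nat) (hk : 2 <= k) (hkn : k <= n) :
  opt_bandit_det_ge n k r (k * (r + 1) - 1).
Proof.
move=> L.
pose x := diag_instance n (Ordinal (ltnW hk)).
pose s := rejected_predictions L x [::] (k * (r + 1) - 1).
have [j rare_j] : exists j : 'I_k, count_mem j s <= r.
  apply: rare_mem; rewrite size_rejected_predictions card_ord addn1.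
  by rewrite subn1 prednK // muln_gt0 ltnW.
have [o o_neq_j] : exists o : 'I_k, o != j by apply: exists_neq; rewrite card_ord.
exists [seq (x, swap_label j o y) | y <- s]; split.
  exists (widen_ord hkn j); rewrite /expert_errors count_map.
  apply: leq_trans rare_j; apply/eq_leq/eq_count => y /=.
  by rewrite expert_diag_instance eq_sym swap_label_eq ?negbK.
by rewrite /mistakes /s mistakes_rejected_predictions // => y; apply: swap_label_neq.
Qed.
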